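(* Let $t$ be the total number of attribute values. The Depth-First Search Sampling algorithm (stack initialized with a matching starting context $C_V$; repeatedly take the top context $C$, mark it visited, compute the matching unvisited contexts connected to $C$, pop if there are none, otherwise push the one selected by $\mathrm{Exp}^{\epsilon_1}_u$; stop after $n$ contexts are visited or the stack is empty; output $\mathrm{Exp}^{\epsilon_1}_u$ applied to the visited contexts) has computational complexity $\mathcal O(t)$.
   Context: Dataset $D$ over categorical attributes $A_1,\dots,A_m$ with domain sizes $|A_i|$, $t=\sum_i|A_i|$. A context is a binary vector of length $t$ selecting a subset of values per attribute; $D_C$ is its population in $D$. Two contexts are connected if their Hamming distance is $1$ (each context has $t$ connected contexts). A context $C$ is matching if $f_M(D_C,V)=\mathrm{true}$ for a deterministic outlier verification $f_M$ for record $V$ w.r.t. metric $M$. $\mathrm{Exp}^{\epsilon}_u$ is the Exponential mechanism selecting from a set with probability proportional to $\exp(\epsilon u/(2\Delta u))$. The number of samples $n$ is treated as a constant; complexity counts outlier-verification calls and mechanism evaluations. *)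

From mathcomp Require Import all_boot all_order.
Set Implicit Arguments. Unset Strict Implicit. Unset Printing Implicit Defensive.

(* Total number of attribute values: t = sum_i |A_i|, for m attributes whose
   domain sizes are given by [sz]. *)
Definition total_values (m : nat) (sz : 'I_m -> nat) : nat := \sum_(i < m) sz i.

Definition ctx (t : nat) := {ffun 'I_t -> bool}.

Definition hamming (t : nat) (C C' : ctx t) : nat := #|[set i | C i != C' i]|.

Definition connected (t : nat) (C C' : ctx t) : bool := hamming C C' == 1.

Definition neighbors (t : nat) (C : ctx t) : seq (ctx t) :=
  [seq C' <- enum {ffun 'I_t -> bool} | connected C C'].

(* State of the DFS sampling algorithm:
   stack, visited contexts, accumulated cost, number of mechanism calls made
   so far (used to index the random outcomes of the Exponential mechanism). *)
Record dfs_state (t : nat) := DfsState {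
  st_stack : seq (ctx t);
  st_visited : seq (ctx t);
  st_cost : nat;
  st_draws : nat }.

(* One iteration of the loop.  [fM C] is the outlier verification
   f_M(D_C, V) (one call = one unit of cost); [pick k S] is the outcome of the
   k-th evaluation of the Exponential mechanism Exp^{eps1}_u on candidate set S
   (one evaluation = one unit of cost). *)
Definition dfs_step (t n : nat) (fM : ctx t -> bool)
  (pick : nat -> seq (ctx t) -> ctx t) (st : dfs_state t) : option (dfs_state t) :=
  match st_stack st with
  | [::] => None
  | C :: rest =>
    if n <= size (st_visited st) then None else
    let vis := if C \in st_visited st then st_visited st
               else rcons (st_visited st) C in
    let nb := neighbors C in
    (* every connected context is examined by one call to f_M (conservative) *)
    let cand := [seq C' <- nb | (C' \notin vis) && fM C'] in
    let cost := st_cost st + size nb in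
    match cand with
    | [::] => Some (DfsState rest vis cost (st_draws st))
    | _ :: _ =>
      Some (DfsState (pick (st_draws st) cand :: st_stack st) vis cost.+1
                     (st_draws st).+1)
    end
  end.

Fixpoint dfs_run (t n : nat) (fM : ctx t -> bool)
  (pick : nat -> seq (ctx t) -> ctx t) (fuel : nat) (st : dfs_state t)
  : option (ctx t * nat) :=
  match dfs_step n fM pick st with
  | None => Some (pick (st_draws st) (st_visited st), (st_cost st).+1)
  | Some st' =>
    match fuel with
    | 0 => None
    | fuel'.+1 => dfs_run n fM pick fuel' st'
    end
  end.

Definition dfs_init (t : nat) (CV : ctx t) : dfs_state t := DfsState [:: CV] [::] 0 0.

From mathcomp Require Import all_boot all_order.
From mathcomp Require Import zify.
Set Implicit Arguments. Unset Strict Implicit. Unset Printing Implicit Defensive.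

(* Each context has at most t connected contexts, one per flipped bit, so an
   iteration of the loop costs at most t + 1.  The loop stops after at most
   2n + 1 iterations, because every iteration decreases the measure
     2 (n - #visited) + #stack + 2 [the top of the stack is visited]:
   the top is either newly visited or already visited, which gains 2 in the
   first or the last term; then a pop gains 1 while the exposed top costs at
   most 2, and a push costs 1 but puts an unvisited context on top. *)

Definition flip (t : nat) (C : ctx t) (i : 'I_t) : ctx t :=
  [ffun j => if j == i then ~~ C j else C j].

Lemma connected_flip (t : nat) (C C' : ctx t) :
  connected C C' -> exists i, C' = flip C i.
Proof.
move=> /cards1P [i diff_i]; exists i; apply/ffunP => j; rewrite ffunE.
have := congr1 (fun A : {set 'I_t} => j \in A) diff_i; rewrite !inE /=.
have [-> | _] := eqVneq j i; first by case: (C i) (C' i) => [] [].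
by move=> /negbFE /eqP.
Qed.

Lemma size_neighbors (t : nat) (C : ctx t) : size (neighbors C) <= t.
Proof.
rewrite -[t in _ <= t]size_enum_ord -(size_map (flip C)).
apply: uniq_leq_size; first by rewrite filter_uniq ?enum_uniq.
move=> C'; rewrite mem_filter => /andP [/connected_flip [i ->] _].
by rewrite map_f ?mem_enum.
Qed.

Definition top_visited (t : nat) (st : dfs_state t) : bool :=
  if st_stack st is C :: _ then C \in st_visited st else false.

Definition dfs_measure (t n : nat) (st : dfs_state t) : nat :=
  2 * (n - size (st_visited st)) + size (st_stack st) + 2 * top_visited st.

Section DfsLoop.

Variables (t n : nat) (fM : ctx t -> bool) (pick : nat -> seq (ctx t) -> ctx t).
Hypothesis pick_in_support : forall k S, S != [::] -> pick k S \in S.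

Lemma dfs_step_cost (st st' : dfs_state t) :
  dfs_step n fM pick st = Some st' -> st_cost st' <= st_cost st + t.+1.
Proof.
case: st => [[|C rest] vis cost draws] //; rewrite /dfs_step /=.
case: (leqP n (size vis)) => // _; have := size_neighbors C.
by case: filter => [|? ?] ? [<-] /=; lia.
Qed.

Lemma dfs_step_measure (st st' : dfs_state t) :
  dfs_step n fM pick st = Some st' -> dfs_measure n st' < dfs_measure n st.
Proof.
case: st => [[|C rest] vis cost draws] //; rewrite /dfs_step /=.
case: (leqP n (size vis)) => // vis_lt_n.
set vis' := if C \in vis then vis else rcons vis C.
have size_vis' : size vis' = size vis + (C \notin vis).
  by rewrite /vis'; case: ifP => _; rewrite ?size_rcons ?addn0 ?addn1.
rewrite /dfs_measure /top_visited /=.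
case cand: filter => [|C1 cands] [<-] /=.
- by case: rest => [|C2 rest] /=; case: (C \in vis) size_vis' => /=; lia.
- have : pick draws (C1 :: cands) \notin vis'.
    have := @pick_in_support draws (C1 :: cands) isT.
    by rewrite -cand mem_filter => /andP [/andP []].
  by move/negPf ->; case: (C \in vis) size_vis' => /=; lia.
Qed.

Lemma dfs_run_cost (fuel : nat) (st : dfs_state t) :
  dfs_measure n st <= fuel ->
  exists out cost, dfs_run n fM pick fuel st = Some (out, cost) /\
    cost <= st_cost st + dfs_measure n st * t.+1 + 1.
Proof.
elim: fuel st => [|fuel IH] st measure_le /=;
  case step: (dfs_step n fM pick st) => [st'|]; try by eexists _, _; split; [reflexivity | lia].
- by have := dfs_step_measure step; lia.
- have [out [cost [-> cost_le]]] := IH st' (leq_trans (dfs_step_measure step) measure_le).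
  exists out, cost; split => //.
  have := dfs_step_cost step.
  have : (dfs_measure n st').+1 * t.+1 <= dfs_measure n st * t.+1.
    exact: leq_mul (dfs_step_measure step) (leqnn _).
  lia.
Qed.

End DfsLoop.

Theorem theorem9 (n : nat) :
  exists c : nat,
  forall (m : nat) (sz : 'I_m -> nat)
         (fM : ctx (total_values sz) -> bool)
         (CV : ctx (total_values sz))
         (pick : nat -> seq (ctx (total_values sz)) -> ctx (total_values sz)),
    fM CV ->
    (forall k S, S != [::] -> pick k S \in S) ->
    exists (fuel : nat) (out : ctx (total_values sz)) (cost : nat),
      dfs_run n fM pick fuel (dfs_init CV) = Some (out, cost) /\
      cost <= c * total_values sz + c.
Proof.
exists (2 * n + 2) => m sz fM CV pick _ pick_in_support.
have [out [cost [run cost_le]]] :=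
  dfs_run_cost fM pick_in_support (leqnn (dfs_measure n (dfs_init CV))).
exists (dfs_measure n (dfs_init CV)), out, cost; split => //.
move: cost_le; rewrite /dfs_measure /top_visited /= subn0.
nia.
Qed.
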